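(* Let $n\ge1$, $d\ge2$, $t\ge1$, and let $\{h_\alpha\}$ be a finite family of Hermitian operators on $(\mathbb C^d)^{\otimes n}$ each of which satisfies $U^{\otimes n}h_\alpha (U^* )^{\otimes n}=h_\alpha$ for all $U\in U(d)$. Then for every degree-$2t$ pseudo-density matrix $\tilde\rho$ (in particular every density matrix, which is the case $t=n$) there is a degree-$2t$ pseudo-density matrix $\tilde\rho'$ (a density matrix if $\tilde\rho$ is one) such that $\operatorname{tr}(\tilde\rho'\Lambda^a_u)=0$ for all $a\in[d^2-1]$ and $u\in[n]$, and $\operatorname{tr}(\tilde\rho' h_\alpha)=\operatorname{tr}(\tilde\rho h_\alpha)$ for every $\alpha$.
   Context: $\Lambda^1,\dots,\Lambda^{d^2-1}$ are the generalized Gell-Mann matrices ($|a\rangle\langle b|+|b\rangle\langle a|$, $-i|a\rangle\langle b|+i|b\rangle\langle a|$ for $a<b$, and $\sqrt{\frac{2}{a(a+1)}}(\sum_{b\le a}|b\rangle\langle b|-a|a+1\rangle\langle a+1|)$ for $1\le a\le d-1$), and $\Lambda^0=\sqrt{2/d}\,I$. $\Lambda^a_u$ denotes $\Lambda^a$ acting on qudit $u$ tensored with identity elsewhere. The products $\Lambda^{a_1}\otimes\cdots\otimes\Lambda^{a_n}$, $a_i\in\{0,\dots,d^2-1\}$, form a basis of operators on $(\mathbb C^d)^{\otimes n}$; the degree of such a basis element is the number of $i$ with $a_i\ne0$, and the degree of an operator is the maximum degree of basis elements with nonzero coefficient in its expansion. A degree-$2t$ pseudo-density matrix is an operator $\tilde\rho$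 on $(\mathbb C^d)^{\otimes n}$ with $\tilde\rho^*=\tilde\rho$, $\operatorname{tr}\tilde\rho=1$, and $\operatorname{tr}(\tilde\rho A^*A)\ge0$ for every operator $A$ of degree at most $t$. *)

From mathcomp Require Import all_boot all_order all_algebra.
From mathcomp Require Import reals complex.
Set Implicit Arguments.
Unset Strict Implicit.
Unset Printing Implicit Defensive.
Import Order.TTheory GRing.Theory Num.Theory.
Local Open Scope ring_scope.

Section QuditOps.
Variables (R : realType) (n d : nat).
Local Notation C := (R[i]).

(* computational basis states of (C^d)^{⊗ n}: one value in [0,d) per qudit *)
Definition cfg := {ffun 'I_n -> 'I_d}.

(* operators on (C^d)^{⊗ n}, as matrices indexed by basis states *)
Definition op := cfg -> cfg -> C.

Definition opmul (A B : op) : op := fun x y => \sum_(z : cfg) A x z * B z y.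
Definition opadj (A : op) : op := fun x y => (A y x)^*.
Definition optr (A : op) : C := \sum_(x : cfg) A x x.
Definition op_hermitian (A : op) : Prop := forall x y, opadj A x y = A x y.

Definition adjmx (U : 'M[C]_d) : 'M[C]_d := \matrix_(i, j) (U j i)^*.
Definition unitary_mx (U : 'M[C]_d) : Prop := U *m adjmx U = 1%:M.

Definition tensprod (M : 'I_n -> 'M[C]_d) : op :=
  fun x y => \prod_(i < n) M i (x i) (y i).

Definition tenspow (U : 'M[C]_d) : op := tensprod (fun _ => U).

(* Generalized Gell-Mann matrices, labelled by pairs (j,k) of 0-based indices:
   - j < k : |j><k| + |k><j|                      (symmetric)
   - j > k : -i|k><j| + i|j><k|                   (antisymmetric, a=k<b=j)
   - j = k = 0 : Lambda^0 = sqrt(2/d) I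
   - j = k = a >= 1 : sqrt(2/(a(a+1))) (sum_{x<a} |x><x| - a |a><a|)
     (this is the paper's diagonal matrix with 1-based index a, a+1 <-> 0-based a). *)
Definition gellmann (p : 'I_d * 'I_d) : 'M[C]_d :=
  let j := p.1 in let k := p.2 in
  \matrix_(x, y)
    if (j < k)%N then
      (if ((x == j) && (y == k)) || ((x == k) && (y == j)) then 1 else 0)
    else if (k < j)%N then
      (if (x == k) && (y == j) then - 'i
       else if (x == j) && (y == k) then 'i else 0)
    else if (nat_of_ord j == 0)%N then
      sqrtC (2 / d%:R) * (x == y)%:R
    else
      (x == y)%:R * sqrtC (2 / (j * j.+1)%N%:R) *
      (if (x < j)%N then 1 else if (nat_of_ord x == j) then - (j%:R) else 0).

Definition is_id_label (p : 'I_d * 'I_d) : bool :=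
  (nat_of_ord p.1 == 0)%N && (nat_of_ord p.2 == 0)%N.

Definition label := {ffun 'I_n -> 'I_d * 'I_d}.

Definition basis_el (f : label) : op := tensprod (fun i => gellmann (f i)).

Definition label_deg (f : label) : nat := #|[set i | ~~ is_id_label (f i)]|.

(* an operator has degree at most t iff in its expansion in the
   (Gell-Mann product) basis only basis elements of degree <= t have nonzero
   coefficient (the expansion is unique since these form a basis) *)
Definition deg_le (A : op) (t : nat) : Prop :=
  exists c : label -> C,
    (forall f, c f != 0 -> (label_deg f <= t)%N) /\
    (forall x y, A x y = \sum_(f : label) c f * basis_el f x y).

Definition is_pseudo_density (t : nat) (rho : op) : Prop :=
  [/\ op_hermitian rho, optr rho = 1 &
      forall A : op, deg_le A t -> 0 <= optr (opmul rho (opmul (opadj A) A))].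

Definition is_density (rho : op) : Prop :=
  [/\ op_hermitian rho, optr rho = 1 &
      forall v : cfg -> C, 0 <= \sum_(x : cfg) \sum_(y : cfg) (v x)^* * rho x y * v y].

Definition local_gm (a : 'I_d * 'I_d) (u : 'I_n) : op :=
  tensprod (fun i => if i == u then gellmann a else 1%:M).

End QuditOps.

From mathcomp Require Import all_boot all_order all_algebra.
From mathcomp Require Import reals complex ring.
From mathcomp Require boolp.
Import Order.TTheory GRing.Theory Num.Theory.
Set Implicit Arguments.
Unset Strict Implicit.
Unset Printing Implicit Defensive.
Local Open Scope ring_scope.

(* The new state is the twirl of rho over the signed shifts
   U_(s,j) : |b> |-> (-1)^(s b) |b + j>, i.e. the average of
   U^{(x)n} rho U^{*(x)n} over all sign patterns s and shifts j.  Averaging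
   U^* M U over this family annihilates every traceless M, so the twirled state
   has zero expectation on each Lambda^a_u, while U(d)-invariant observables
   keep their expectations.  The Gell-Mann matrices span all d x d matrices and
   conjugation by a unitary fixes Lambda^0 (a multiple of I), so conjugation by a
   product unitary never raises the degree of an operator; hence
   tr(twirl(rho) A^*A) is an average of values tr(rho B^*B) with
   deg B <= deg A, and the twirl is again a degree-2t pseudo-density matrix
   (a density matrix if rho is one). *)

Section OperatorAlgebra.
Variables (R : realType) (n d : nat).
Local Notation C := R[i].
Local Notation op := (op R n d).
Local Notation cfg := (cfg n d).

Definition opid : op := fun x y => (x == y)%:R.

Definition opcomb (I : finType) (w : I -> C) (B : I -> op) : op :=
  fun x y => \sum_i w i * B i x y.

Definition opconj (U : 'M[C]_d) (A : op) : op :=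
  opmul (opmul (tenspow U) A) (tenspow (adjmx U)).

Definition opform (A : op) (v : cfg -> C) : C :=
  \sum_x \sum_y (v x)^* * A x y * v y.

Lemma opext (A B : op) : (forall x y, A x y = B x y) -> A = B.
Proof. by move=> eAB; do 2!apply: boolp.funext => ?. Qed.

Lemma opmulA (A B D : op) : opmul (opmul A B) D = opmul A (opmul B D).
Proof.
apply: opext => x y; rewrite /opmul; under eq_bigr do rewrite mulr_suml.
rewrite exchange_big; apply: eq_bigr => z _; rewrite mulr_sumr.
by apply: eq_bigr => w _; rewrite mulrA.
Qed.

Lemma opmul1 (A : op) : opmul A opid = A.
Proof.
apply: opext => x y; rewrite /opmul (bigD1 y) //= big1 ?addr0 /opid ?eqxx ?mulr1 //.
by move=> z /negbTE; rewrite eq_sym => ->; rewrite mulr0.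
Qed.

Lemma op1mul (A : op) : opmul opid A = A.
Proof.
apply: opext => x y; rewrite /opmul (bigD1 x) //= big1 ?addr0 /opid ?eqxx ?mul1r //.
by move=> z /negbTE; rewrite eq_sym => ->; rewrite mul0r.
Qed.

Lemma optrC (A B : op) : optr (opmul A B) = optr (opmul B A).
Proof.
rewrite /optr /opmul exchange_big; apply: eq_bigr => x _.
by apply: eq_bigr => y _; rewrite mulrC.
Qed.

Lemma opadj_mul (A B : op) : opadj (opmul A B) = opmul (opadj B) (opadj A).
Proof.
apply: opext => x y; rewrite /opadj /opmul rmorph_sum; apply: eq_bigr => z _.
by rewrite rmorphM mulrC.
Qed.

Lemma op_hermitianE (A : op) : op_hermitian A <-> opadj A = A.
Proof. by split=> [/opext | hA x y]; last rewrite hA. Qed.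

Lemma opmul_combl (I : finType) (w : I -> C) (B : I -> op) (A : op) :
  opmul (opcomb w B) A = opcomb w (fun i => opmul (B i) A).
Proof.
apply: opext => x y; rewrite /opmul /opcomb.
under eq_bigr do rewrite mulr_suml.
rewrite exchange_big; apply: eq_bigr => i _; rewrite mulr_sumr.
by apply: eq_bigr => z _; rewrite mulrA.
Qed.

Lemma opmul_combr (I : finType) (w : I -> C) (B : I -> op) (A : op) :
  opmul A (opcomb w B) = opcomb w (fun i => opmul A (B i)).
Proof.
apply: opext => x y; rewrite /opmul /opcomb.
under eq_bigr do rewrite mulr_sumr.
rewrite exchange_big; apply: eq_bigr => i _; rewrite mulr_sumr.
by apply: eq_bigr => z _; rewrite mulrCA.
Qed.

Lemma optr_comb (I : finType) (w : I -> C) (B : I -> op) :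
  optr (opcomb w B) = \sum_i w i * optr (B i).
Proof.
rewrite /optr /opcomb exchange_big; apply: eq_bigr => i _.
by rewrite mulr_sumr.
Qed.

Lemma opadj_comb (I : finType) (w : I -> C) (B : I -> op) :
  opadj (opcomb w B) = opcomb (fun i => (w i)^*) (fun i => opadj (B i)).
Proof.
apply: opext => x y; rewrite /opadj /opcomb rmorph_sum.
by apply: eq_bigr => i _; rewrite rmorphM.
Qed.

Lemma opform_comb (I : finType) (w : I -> C) (B : I -> op) (v : cfg -> C) :
  opform (opcomb w B) v = \sum_i w i * opform (B i) v.
Proof.
rewrite /opform /opcomb.
under eq_bigr do under eq_bigr do rewrite big_distrr big_distrl.
under eq_bigr do rewrite exchange_big; rewrite exchange_big.
apply: eq_bigr => i _; rewrite mulr_sumr; apply: eq_bigr => x _.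
by rewrite mulr_sumr; apply: eq_bigr => y _ /=; ring.
Qed.

Lemma tensprod_mul (M N : 'I_n -> 'M[C]_d) :
  opmul (tensprod M) (tensprod N) = tensprod (fun i => M i *m N i).
Proof.
apply: opext => x y; rewrite /opmul /tensprod.
under [RHS]eq_bigr do rewrite mxE.
rewrite bigA_distr_bigA /=; apply: eq_bigr => z _.
by rewrite -big_split.
Qed.

Lemma tensprod_adj (M : 'I_n -> 'M[C]_d) :
  opadj (tensprod M) = tensprod (fun i => adjmx (M i)).
Proof.
apply: opext => x y; rewrite /opadj /tensprod rmorph_prod.
by apply: eq_bigr => i _; rewrite mxE.
Qed.

Lemma tensprod1 : tensprod (fun _ => 1%:M) = opid.
Proof.
apply: opext => x y; rewrite /tensprod /opid.
under eq_bigr do rewrite mxE.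
have [->|nxy] := eqVneq x y; first by rewrite big1 // => i _; rewrite eqxx.
have [i xy_i] : exists i, x i != y i.
  apply/existsP; apply: contraR nxy => /existsPn xy; apply/eqP/ffunP => i.
  by apply/eqP; move: (xy i); rewrite negbK.
by rewrite (bigD1 i) //= (negbTE xy_i) mul0r.
Qed.

Lemma adjmxK : involutive (@adjmx R d).
Proof. by move=> U; apply/matrixP => i j; rewrite !mxE conjCK. Qed.

Lemma unitary_mxV (U : 'M[C]_d) : unitary_mx U -> adjmx U *m U = 1%:M.
Proof. exact: mulmx1C. Qed.

Lemma unitary_adjmx (U : 'M[C]_d) : unitary_mx U -> unitary_mx (adjmx U).
Proof. by move=> uU; rewrite /unitary_mx adjmxK unitary_mxV. Qed.

Lemma opconj_tensprod (U : 'M[C]_d) (M : 'I_n -> 'M[C]_d) :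
  opconj U (tensprod M) = tensprod (fun i => U *m M i *m adjmx U).
Proof. by rewrite /opconj /tenspow !tensprod_mul. Qed.

Lemma opconj_adj (U : 'M[C]_d) (A : op) :
  opconj U (opadj A) = opadj (opconj U A).
Proof.
by rewrite /opconj !opadj_mul !tensprod_adj adjmxK opmulA.
Qed.

Lemma opconj_mul (U : 'M[C]_d) (A B : op) : unitary_mx U ->
  opconj U (opmul A B) = opmul (opconj U A) (opconj U B).
Proof.
move=> uU; rewrite /opconj !opmulA -[opmul (tenspow (adjmx U)) _]opmulA.
by rewrite tensprod_mul unitary_mxV // tensprod1 op1mul.
Qed.

Lemma opconj1 (U : 'M[C]_d) : unitary_mx U -> opconj U opid = opid.
Proof. by move=> uU; rewrite /opconj opmul1 tensprod_mul uU tensprod1. Qed.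

Lemma optr_opconj (U : 'M[C]_d) (A B : op) :
  optr (opmul (opconj U A) B) = optr (opmul A (opconj (adjmx U) B)).
Proof.
by rewrite /opconj adjmxK !opmulA optrC !opmulA.
Qed.

Lemma opform_opconj (U : 'M[C]_d) (A : op) (v : cfg -> C) :
  opform (opconj U A) v = opform A (fun a => \sum_x (tenspow U x a)^* * v x).
Proof.
have adjW (b y : cfg) : tenspow (adjmx U) b y = (tenspow U y b)^*.
  by rewrite -[RHS]/(opadj (tensprod (fun _ => U)) b y) tensprod_adj.
have term x y : (v x)^* * opconj U A x y * v y =
    \sum_b \sum_a (v x)^* * tenspow U x a * A a b * ((tenspow U y b)^* * v y).
  rewrite /opconj /opmul big_distrr big_distrl; apply: eq_bigr => b _.
  rewrite adjW big_distrl /= mulr_sumr mulr_suml; apply: eq_bigr => a _; ring.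
rewrite /opform; under eq_bigr do under eq_bigr do rewrite term.
under eq_bigr do rewrite exchange_big.
under eq_bigr do under eq_bigr do rewrite exchange_big.
rewrite exchange_big [RHS]exchange_big; apply: eq_bigr => b _.
rewrite exchange_big; apply: eq_bigr => a _.
rewrite rmorph_sum !mulr_suml; apply: eq_bigr => x _.
rewrite mulr_sumr; apply: eq_bigr => y _.
by rewrite rmorphM /= conjCK; ring.
Qed.
End OperatorAlgebra.

Lemma memv_span_enum (K : fieldType) (vT : vectType K) (T : finType)
    (f : T -> vT) (v : vT) :
  v \in <<[seq f q | q : T]>>%VS -> exists c : T -> K, v = \sum_q c q *: f q.
Proof.
rewrite span_def big_map big_enum /= => /memv_sumP[vs vsP ->].
have /fin_all_exists[c vsE] q : exists k, vs q = k *: f q by apply/vlineP/vsP.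
by exists c; apply: eq_bigr => q _; rewrite vsE.
Qed.

Lemma sumr_delta (T : finType) (K : pzSemiRingType) (c : T) (F : T -> K) :
  \sum_a (a == c)%:R * F a = F c.
Proof.
rewrite (bigD1 c) //= big1 ?addr0 ?eqxx ?mul1r // => a /negbTE->.
by rewrite mul0r.
Qed.

Section GellMannOffDiagonal.
Variables (R : realType) (d : nat).
Local Notation gm := (gellmann R (d := d)).

Lemma delta_mx_lt (x y : 'I_d) : (x < y)%N ->
  delta_mx x y = 2^-1 *: (gm (x, y) + 'i *: gm (y, x)).
Proof.
move=> xy; have [nxy nyx] : x != y /\ y != x by rewrite !neq_ltn xy orbT.
apply/matrixP => a b; rewrite !mxE /= xy ltnNge ltnW //=.
case: (eqVneq a x) => [->|_]; rewrite ?(negbTE nxy) /=.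
  case: eqVneq => _ /=; rewrite ?orbF; last by rewrite !(mulr0, addr0).
  by rewrite mulrN -expr2 sqrCi opprK mulVf ?pnatr_eq0.
case: (eqVneq a y) => _ /=; last by rewrite !(mulr0, addr0).
case: eqVneq => _ /=; last by rewrite !(mulr0, addr0).
by rewrite -expr2 sqrCi subrr mulr0.
Qed.

Lemma delta_mx_gt (x y : 'I_d) : (y < x)%N ->
  delta_mx x y = 2^-1 *: (gm (y, x) - 'i *: gm (x, y)).
Proof.
move=> yx; have [nxy nyx] : x != y /\ y != x by rewrite !neq_ltn yx orbT.
apply/matrixP => a b; rewrite !mxE /= yx ltnNge ltnW //=.
case: (eqVneq a x) => [->|_]; rewrite ?(negbTE nxy) /=.
  case: eqVneq => _ /=; last by rewrite !(mulr0, subr0).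
  by rewrite -expr2 sqrCi opprK mulVf ?pnatr_eq0.
case: (eqVneq a y) => _ /=; last by rewrite !(mulr0, subr0).
case: eqVneq => _ /=; last by rewrite !(mulr0, subr0).
by rewrite mulrN -expr2 sqrCi opprK subrr mulr0.
Qed.

End GellMannOffDiagonal.

Section GellMannBasis.
Variables (R : realType) (d' : nat).
Local Notation d := d'.+1.
Local Notation C := R[i].
Local Notation gm := (gellmann R (d := d)).
Local Notation gm_span := <<[seq gm q | q : 'I_d * 'I_d]>>%VS.

Definition pref_mx (m : nat) : 'M[C]_d :=
  \matrix_(x, y) ((x == y) && (x < m)%N)%:R.

Lemma gellmann_in_span q : gm q \in gm_span.
Proof. by apply/memv_span/map_f; rewrite mem_enum. Qed.

Lemma pref_mx_full : pref_mx d = 1%:M.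
Proof. by apply/matrixP => x y; rewrite !mxE ltn_ord andbT. Qed.

Lemma gellmann0 : gm (ord0, ord0) = sqrtC (2 / d%:R) *: 1%:M.
Proof. by apply/matrixP => x y; rewrite !mxE. Qed.

Lemma gellmann_diag (m : 'I_d) : (0 < m)%N ->
  gm (m, m)
  = sqrtC (2 / (m * m.+1)%N%:R) *: (m.+1%:R *: pref_mx m - m%:R *: pref_mx m.+1).
Proof.
move=> m_gt0; apply/matrixP => x y; rewrite !mxE /= ltnn eqn0Ngt m_gt0 /=.
case: (eqVneq x y) => _ /=; last by rewrite !(mulr0, mul0r) subrr mulr0.
rewrite mul1r ltnS; congr (_ * _).
case: ltngtP => _.
- by rewrite !mulr1 -natrB // subSnn.
- by rewrite !mulr0 subrr.
- by rewrite mulr0 mulr1 sub0r.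
Qed.

Lemma pref_mx_in_span m : (m <= d)%N -> pref_mx m \in gm_span.
Proof.
move=> le_md; rewrite -(subKn le_md); elim: (d - m)%N => [|k IHk].
  have s_neq0 : sqrtC (2 / d%:R) != 0 :> C.
    by rewrite sqrtC_eq0 mulf_neq0 ?invr_eq0 ?pnatr_eq0.
  rewrite subn0 pref_mx_full -(scalerK s_neq0 1%:M) -gellmann0.
  by rewrite memvZ ?gellmann_in_span.
set j := (d - k.+1)%N; have [->|j_gt0] := posnP j.
  by rewrite (_ : pref_mx 0 = 0) ?mem0v //; apply/matrixP => x y; rewrite !mxE andbF.
have lt_jd : (j < d)%N by rewrite ltn_subrL.
have IHj : pref_mx j.+1 \in gm_span by rewrite /j subnSK // ltnW // -subn_gt0.
have s_neq0 : sqrtC (2 / (j * j.+1)%N%:R) != 0 :> C.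
  by rewrite sqrtC_eq0 mulf_neq0 ?invr_eq0 ?pnatr_eq0 // muln_eq0 negb_or -lt0n j_gt0.
have : j.+1%:R *: pref_mx j \in gm_span.
  rewrite -[_ *: pref_mx j](subrK (j%:R *: pref_mx j.+1)) -(scalerK s_neq0 (_ - _)).
  rewrite -(gellmann_diag (m := Ordinal lt_jd) j_gt0).
  by apply: memvD; apply: memvZ => //; apply: gellmann_in_span.
by move=> /(memvZ (j.+1%:R)^-1); rewrite scalerK // pnatr_eq0.
Qed.

Lemma delta_mx_diag (x : 'I_d) : delta_mx x x = pref_mx x.+1 - pref_mx x.
Proof.
apply/matrixP => a b; rewrite !mxE.
case: (eqVneq a b) => [<-|nab] /=; last first.
  rewrite subrr; case: (eqVneq a x) => [eax|] //=.
  by rewrite -eax eq_sym (negbTE nab).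
by rewrite andbb -val_eqE ltnS leq_eqVlt /=; case: ltngtP; rewrite ?subrr ?subr0.
Qed.

Lemma gellmann_span (M : 'M[C]_d) :
  exists c : 'I_d * 'I_d -> C, M = \sum_q c q *: gm q.
Proof.
apply: memv_span_enum; rewrite (matrix_sum_delta M).
apply: memv_suml => a _; apply: memv_suml => b _; apply: memvZ.
case: (ltngtP a b) => [ab|ba|/val_inj->].
- by rewrite delta_mx_lt // memvZ ?memvD ?memvZ ?gellmann_in_span.
- by rewrite delta_mx_gt // memvZ ?memvB ?memvZ ?gellmann_in_span.
- by rewrite delta_mx_diag memvB ?pref_mx_in_span // ltnW.
Qed.

Lemma mxtrace_pref_mx m : (m <= d)%N -> \tr (pref_mx m) = m%:R.
Proof.
move=> le_md; rewrite /mxtrace; under eq_bigr do rewrite mxE eqxx.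
transitivity (\sum_(i < m) (1 : C)); last by rewrite sumr_const card_ord.
rewrite (big_ord_widen _ (fun=> 1) le_md) [RHS]big_mkcond /=.
by apply: eq_bigr => i _; case: ifP.
Qed.

Lemma mxtrace_gellmann p : ~~ is_id_label p -> \tr (gm p) = 0.
Proof.
case: p => j k; rewrite /is_id_label /= => not_id.
have offdiag (x y z : 'I_d) : x != y -> (z == x) && (z == y) = false.
  by move=> nxy; case: eqVneq => // ->; rewrite (negbTE nxy).
case: (ltngtP j k) => [jk|kj|/val_inj ejk].
- have [njk nkj] : j != k /\ k != j by rewrite !neq_ltn jk orbT.
  by apply: big1 => z _; rewrite mxE /= jk !offdiag.
- have [njk nkj] : j != k /\ k != j by rewrite !neq_ltn kj orbT.
  by apply: big1 => z _; rewrite mxE /= ltnNge (ltnW kj) /= kj !offdiag.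
subst k; rewrite andbb -lt0n in not_id.
rewrite gellmann_diag // linearZ linearB !linearZ /=.
rewrite !mxtrace_pref_mx ?(ltnW (ltn_ord j)) //.
by rewrite -[_ *: _]/(_ * _) mulrN [j.+1%:R * _]mulrC subrr mulr0.
Qed.

End GellMannBasis.

Section Degree.
Variables (R : realType) (n d' : nat).
Local Notation d := d'.+1.
Local Notation C := R[i].
Local Notation op := (op R n d).
Local Notation gm := (gellmann R (d := d)).
Local Notation gm0 := (gm (ord0, ord0)).

Lemma is_id_labelE (p : 'I_d * 'I_d) : is_id_label p = (p == (ord0, ord0)).
Proof. by case: p => j k; rewrite /is_id_label xpair_eqE -!val_eqE. Qed.

Lemma deg_le_mono (A : op) (s t : nat) : deg_le A s -> (s <= t)%N -> deg_le A t.
Proof. by move=> [c [c_deg cA]] le_st; exists c; split=> // f /c_deg/leq_trans->. Qed.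

Lemma deg_le_comb (I : finType) (w : I -> C) (B : I -> op) (t : nat) :
  (forall i, w i != 0 -> deg_le (B i) t) -> deg_le (opcomb w B) t.
Proof.
move=> B_deg.
have /fin_all_exists[c cP] i : exists c : label n d -> C,
    w i != 0 -> (forall f, c f != 0 -> (label_deg f <= t)%N) /\
                (forall x y, B i x y = \sum_f c f * basis_el R f x y).
  have [/B_deg[c ?]|_] := boolP (w i != 0); first by exists c.
  by exists (fun _ => 0).
exists (fun f => \sum_i w i * c i f); split.
  move=> f /eqP/eqP; case: (pickP (fun i => w i * c i f != 0)) => [i|all0]; last first.
    by rewrite big1 ?eqxx // => i _; apply/eqP/negbFE/all0.
  by rewrite mulf_eq0 negb_or => /andP[/cP[c_deg _] /c_deg].
move=> x y; rewrite /opcomb.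
have term i : w i * B i x y = \sum_f w i * c i f * basis_el R f x y.
  have [->|/cP[_ ->]] := eqVneq (w i) 0.
    by rewrite mul0r big1 // => f _; rewrite !mul0r.
  by rewrite mulr_sumr; apply: eq_bigr => f _; rewrite mulrA.
under eq_bigr do rewrite term.
by rewrite exchange_big; apply: eq_bigr => f _; rewrite mulr_suml.
Qed.

Lemma deg_le_tensprod (M : 'I_n -> 'M[C]_d) :
  deg_le (tensprod M) #|[set i | M i != gm0]|.
Proof.
have /fin_all_exists[c cP] i : exists c : 'I_d * 'I_d -> C,
    M i = \sum_q c q *: gm q /\ (M i = gm0 -> forall q, c q = (q == (ord0, ord0))%:R).
  have [->|Mi_neq0] := eqVneq (M i) gm0; last first.
    have [c Mc] := gellmann_span (M i).
    by exists c; split=> // Mi0; rewrite Mi0 eqxx in Mi_neq0.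
  exists (fun q => (q == (ord0, ord0))%:R); split=> //.
  rewrite (bigD1 (ord0, ord0)) //= big1 ?addr0 ?scale1r // => q /negbTE->.
  by rewrite scale0r.
exists (fun g : label n d => \prod_i c i (g i)); split.
  move=> g /prodf_neq0 cg_neq0; apply/subset_leq_card/subsetP => i.
  rewrite !inE; apply: contra => /eqP /(proj2 (cP i)) ci.
  by move: (cg_neq0 i isT); rewrite ci is_id_labelE pnatr_eq0 eqb0 negbK.
move=> x y; rewrite /tensprod.
under eq_bigr => i _ do rewrite (proj1 (cP i)) summxE.
rewrite bigA_distr_bigA /=; apply: eq_bigr => g _.
by rewrite /basis_el /tensprod -big_split; apply: eq_bigr => i _; rewrite mxE.
Qed.

Lemma deg_le_opconj (U : 'M[C]_d) (A : op) (t : nat) :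
  unitary_mx U -> deg_le A t -> deg_le (opconj U A) t.
Proof.
move=> uU [c [c_deg /opext->]].
rewrite /opconj opmul_combr opmul_combl.
apply: deg_le_comb => f /c_deg le_ft; rewrite /basis_el -/(opconj _ _) opconj_tensprod.
apply: deg_le_mono (deg_le_tensprod _) _; apply/(leq_trans _ le_ft)/subset_leq_card.
apply/subsetP => i; rewrite !inE; apply: contra; rewrite is_id_labelE => /eqP->.
by rewrite gellmann0 -scalemxAr -scalemxAl mulmx1 uU.
Qed.

End Degree.

Section LocalOperators.
Variables (R : realType) (n d : nat).
Local Notation C := R[i].
Local Notation op := (op R n d).

Definition local_op (M : 'M[C]_d) (u : 'I_n) : op :=
  tensprod (fun i => if i == u then M else 1%:M).

Lemma local_opE (M : 'M[C]_d) u x y :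
  local_op M u x y = M (x u) (y u) * \prod_(i | i != u) (x i == y i)%:R.
Proof.
rewrite /local_op /tensprod (bigD1 u) //= eqxx; congr (_ * _).
by apply: eq_bigr => i /negbTE->; rewrite mxE.
Qed.

Lemma local_op_comb (I : finType) (w : I -> C) (M : I -> 'M[C]_d) u :
  opcomb w (fun i => local_op (M i) u) = local_op (\sum_i w i *: M i) u.
Proof.
apply: opext => x y; rewrite /opcomb local_opE summxE big_distrl.
by apply: eq_bigr => i _; rewrite local_opE mxE mulrA.
Qed.

Lemma optr_mul_local_op0 (A : op) u : optr (opmul A (local_op 0 u)) = 0.
Proof.
rewrite /optr big1 // => x _; rewrite /opmul big1 // => z _.
by rewrite local_opE mxE mul0r mulr0.
Qed.

Lemma opconj_local_op (U M : 'M[C]_d) u : unitary_mx U ->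
  opconj U (local_op M u) = local_op (U *m M *m adjmx U) u.
Proof.
move=> uU; rewrite /local_op opconj_tensprod; congr tensprod.
by apply: boolp.funext => i; case: eqP => // _; rewrite mulmx1 uU.
Qed.

End LocalOperators.

Section Twirl.
Variables (R : realType) (n d : nat) (K : finType) (U : K -> 'M[R[i]]_d).
Hypothesis U_unitary : forall k, unitary_mx (U k).
Hypothesis K_gt0 : (0 < #|K|)%N.
Local Notation op := (op R n d).

Definition twirl (rho : op) : op :=
  opcomb (fun _ => #|K|%:R^-1) (fun k => opconj (U k) rho).

Lemma optr_twirl (rho B : op) :
  optr (opmul (twirl rho) B)
  = #|K|%:R^-1 * \sum_k optr (opmul rho (opconj (adjmx (U k)) B)).
Proof.
rewrite /twirl opmul_combl optr_comb -mulr_sumr.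
by congr (_ * _); apply: eq_bigr => k _; apply: optr_opconj.
Qed.

Lemma optr_twirl_invariant (rho B : op) :
  (forall k, opconj (adjmx (U k)) B = B) ->
  optr (opmul (twirl rho) B) = optr (opmul rho B).
Proof.
move=> B_inv; rewrite optr_twirl; under eq_bigr do rewrite B_inv.
rewrite sumr_const cardT -cardE -[X in _ * X]mulr_natl mulrA.
by rewrite mulVf ?mul1r // pnatr_eq0 -lt0n.
Qed.

Lemma optr_twirl_id (rho : op) : optr (twirl rho) = optr rho.
Proof.
rewrite -[twirl rho]opmul1 -[in RHS](opmul1 rho) optr_twirl_invariant // => k.
exact/opconj1/unitary_adjmx.
Qed.

Lemma optr_twirl_local_op (rho : op) (M : 'M_d) u :
  \sum_k adjmx (U k) *m M *m U k = 0 -> optr (opmul (twirl rho) (local_op M u)) = 0.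
Proof.
move=> avg0; rewrite optr_twirl.
have conjE k :
    opconj (adjmx (U k)) (local_op M u) = local_op (adjmx (U k) *m M *m U k) u.
  by rewrite opconj_local_op ?adjmxK //; apply: unitary_adjmx.
under eq_bigr do rewrite conjE.
rewrite mulr_sumr -optr_comb -opmul_combr local_op_comb -scaler_sumr avg0 scaler0.
exact: optr_mul_local_op0.
Qed.

Lemma twirl_hermitian (rho : op) : op_hermitian rho -> op_hermitian (twirl rho).
Proof.
rewrite !op_hermitianE /twirl opadj_comb => rho_h.
congr opcomb; apply: boolp.funext => k.
  by rewrite fmorphV rmorph_nat.
by rewrite -opconj_adj rho_h.
Qed.

Lemma twirl_density (rho : op) : is_density rho -> is_density (twirl rho).
Proof.
case=> rho_h tr1 rho_psd; split; first exact: twirl_hermitian.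
  by rewrite optr_twirl_id.
move=> v; rewrite -[X in 0 <= X]/(opform (twirl rho) v) opform_comb.
apply: sumr_ge0 => k _; rewrite opform_opconj mulr_ge0 ?invr_ge0 ?ler0n //.
exact: rho_psd.
Qed.

End Twirl.

Lemma twirl_pseudo_density (R : realType) (n d' t : nat) (K : finType)
    (U : K -> 'M[R[i]]_d'.+1) (rho : op R n d'.+1) :
  (forall k, unitary_mx (U k)) -> (0 < #|K|)%N ->
  is_pseudo_density t rho -> is_pseudo_density t (twirl U rho).
Proof.
move=> U_unitary K_gt0 [rho_h tr1 rho_pos]; split.
- exact: twirl_hermitian.
- by rewrite optr_twirl_id.
move=> A A_deg; rewrite optr_twirl mulr_ge0 ?invr_ge0 ?ler0n // sumr_ge0 // => k _.
have V_unitary := unitary_adjmx (U_unitary k).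
by rewrite opconj_mul // opconj_adj; apply/rho_pos/deg_le_opconj.
Qed.

Section SignedShifts.
Variables (R : realType) (d' : nat).
Local Notation d := d'.+1.
Local Notation C := R[i].

Definition signed_shift (k : {ffun 'I_d -> bool} * 'I_d) : 'M[C]_d :=
  \matrix_(a, b) ((a == b + k.2)%:R * (-1) ^+ k.1 b).

Lemma adj_signed_shiftE k (a b : 'I_d) :
  adjmx (signed_shift k) a b = (b == a + k.2)%:R * (-1) ^+ k.1 a.
Proof. by rewrite !mxE rmorphM /= rmorph_nat rmorph_sign. Qed.

Lemma signed_shift_unitary k : unitary_mx (signed_shift k).
Proof.
apply/matrixP => x y; rewrite !mxE.
have shiftE z : (x == z + k.2) = (z == x - k.2) by rewrite [RHS]eq_sym subr_eq.
under eq_bigr => z _ do rewrite adj_signed_shiftE mxE shiftE -mulrA.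
by rewrite sumr_delta subrK mulrCA -signr_addb addbb mulr1 eq_sym.
Qed.

Lemma signed_shift_conjE k (M : 'M[C]_d) a b :
  (adjmx (signed_shift k) *m M *m signed_shift k) a b
  = (-1) ^+ (k.1 a (+) k.1 b) * M (a + k.2) (b + k.2).
Proof.
rewrite mxE; under eq_bigr => j _ do rewrite [signed_shift k j b]mxE mulrCA.
rewrite sumr_delta mxE; under eq_bigr => i _ do rewrite adj_signed_shiftE -mulrA.
by rewrite sumr_delta signr_addb mulrAC.
Qed.

Lemma sum_sign_pair (T : finType) (a b : T) : a != b ->
  \sum_(s : {ffun T -> bool}) (-1) ^+ (s a (+) s b) = 0 :> C.
Proof.
move=> nab; pose flip (s : {ffun T -> bool}) := [ffun z => (z == a) (+) s z].
have flipK : involutive flip.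
  by move=> s; apply/ffunP => z; rewrite !ffunE addbA addbb.
set S := \sum_s _; have : S = - S.
  rewrite {1}/S (reindex_inj (inv_inj flipK)) -sumrN; apply: eq_bigr => s _.
  by rewrite !ffunE eqxx eq_sym (negbTE nab) addTb addFb addNb signrN.
by move/eqP; rewrite -addr_eq0 -mulr2n mulrn_eq0 => /eqP.
Qed.

Lemma signed_shift_average (M : 'M[C]_d) : \tr M = 0 ->
  \sum_k adjmx (signed_shift k) *m M *m signed_shift k = 0.
Proof.
move=> trM0; apply/matrixP => a b; rewrite summxE mxE.
under eq_bigr do rewrite signed_shift_conjE.
pose F (s : {ffun 'I_d -> bool}) j := (-1) ^+ (s a (+) s b) * M (a + j) (b + j).
rewrite -(pair_bigA _ F) /= {}/F.
have [<-{b}|nab] := eqVneq a b.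
  apply: big1 => s _; under eq_bigr do rewrite addbb mul1r.
  by rewrite -[RHS]trM0 /mxtrace [RHS](reindex_inj (addrI a)).
rewrite exchange_big; apply: big1 => j _ /=.
by rewrite -mulr_suml sum_sign_pair // mul0r.
Qed.

End SignedShifts.

Theorem mainTheorem14 (R : realType) (n d t : nat) (A : finType)
    (h : A -> op R n d) :
  (1 <= n)%N -> (2 <= d)%N -> (1 <= t)%N ->
  (forall al, op_hermitian (h al)) ->
  (forall al (U : 'M[R[i]]_d), unitary_mx U ->
     forall x y, opmul (opmul (tenspow U) (h al)) (tenspow (adjmx U)) x y
                 = h al x y) ->
  forall rho : op R n d, is_pseudo_density t rho ->
  exists rho' : op R n d,
    [/\ is_pseudo_density t rho',
        is_density rho -> is_density rho',
        (forall (a : 'I_d * 'I_d) (u : 'I_n), ~~ is_id_label a ->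
           optr (opmul rho' (local_gm R a u)) = 0)
      & (forall al, optr (opmul rho' (h al)) = optr (opmul rho (h al)))].
Proof.
case: d h => [//|d'] h _ _ _ _ h_inv rho rho_pd.
have U_unitary := @signed_shift_unitary R d'.
have K_gt0 : (0 < #|{: {ffun 'I_d'.+1 -> bool} * 'I_d'.+1}|)%N.
  by apply/card_gt0P; exists ([ffun=> false], ord0).
exists (twirl (@signed_shift R d') rho); split.
- exact: twirl_pseudo_density.
- exact: twirl_density.
- move=> a u not_id; apply: (optr_twirl_local_op U_unitary).
  exact/signed_shift_average/mxtrace_gellmann.
- move=> al; apply: optr_twirl_invariant => // k.
  exact/opext/h_inv/unitary_adjmx.
Qed.
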